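(* Let $d\geq 2$ be a fixed integer, let $n\geq d\cdot 64^{d \log d}$ be an integer and let $k$ be a positive integer with $k \leq n^{(d-1)/d}\cdot (5d)^{1/d-2}$. Define $h = \left\lceil \left(\tfrac{9d}{2}\cdot (k+2)\right)^{1/(d-1)} -1\right\rceil$ and $m=\left\lfloor n/ \left(d\cdot (h+1)^d+ d\cdot (h+1)^{d-1}\right)\right\rfloor$, and for $i\in\{1,\dots,d\}$ let $$P_i=\bigcup^{h}_{j_1=0}\cdots \bigcup^{h}_{j_d=0}\{ (j_1 m,\dots,j_{i-1} m,x_i,j_{i+1} m,\dots,j_d m) \mid x_i\in \{0, \dots, h m\}\}\subset\mathbb{R}^d,$$ and $P_{d,n,k}=\bigcup_{i=1}^d P_i$. Then $m\geq 1$ (so $P_{d,n,k}$ is well-defined, resembling the $(h+1)^d$-grid with each grid edge subdivided into $m$ unit segments) and $|P_{d,n,k}|\leq n$. *)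

From Stdlib Require Import Reals.
From mathcomp Require Import all_boot.

(* h = ceil( (9d/2 (k+2))^(1/(d-1)) - 1 ),  ceil y = - floor (- y),
   floor = Int_part (Int_part r = up r - 1).  The value is >= 1 when d >= 2. *)
Definition hval (d k : nat) : nat :=
  Z.to_nat (Z.opp (Int_part (Ropp (Rminus
     (Rpower (Rmult (Rdiv (Rmult 9 (INR d)) 2) (Rplus (INR k) 2))
             (Rdiv 1 (Rminus (INR d) 1))) 1)))).

Definition mval (d n h : nat) : nat :=
  Z.to_nat (Int_part (Rdiv (INR n)
     (Rplus (Rmult (INR d) (pow (INR (h + 1)) d))
            (Rmult (INR d) (pow (INR (h + 1)) (d - 1)))))).

(* Points of the integer box {0,...,h m}^d, a subset of R^d (encoded injectively). *)
Definition point (d h m : nat) := {ffun 'I_d -> 'I_(h * m).+1}.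

Definition Pi (d h m : nat) (i : 'I_d) : {set point d h m} :=
  \bigcup_(j : {ffun 'I_d -> 'I_h.+1})
    [set x : point d h m | [forall l : 'I_d, (l != i) ==> (val (x l) == val (j l) * m)]].

Definition Pset (d h m : nat) : {set point d h m} := \bigcup_(i < d) Pi d h m i.

(* P is a union of d families of (h+1)^(d-1) lines of h m + 1 points each, so
   |P| <= d (h+1)^(d-1) (h m + 1) <= m (d (h+1)^d + d (h+1)^(d-1)) <= n by the choice of m.
   It remains to show m >= 1, i.e. d (h+1)^(d-1) (h+2) <= n, which is at most d (h+2)^d.
   If h + 2 <= d^6 this follows from n >= d 64^(d log_2 d) = d (d^6)^d.  Otherwise h is large
   compared to d, so (h+2)^(d-1) is close to h^(d-1) < 9d/2 (k+2), and after raising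
   d (h+2)^d to the power d-1 the bound follows from the hypothesis on k. *)
From Stdlib Require Import Reals Lra Lia Psatz ZArith.
From mathcomp Require Import all_boot zify.

Lemma card_bigcup_le (T : finType) (I : Type) (r : seq I) (P : pred I) (F : I -> {set T}) :
  #|\bigcup_(i <- r | P i) F i| <= \sum_(i <- r | P i) #|F i|.
Proof.
elim/big_rec2: _ => [|i B n _ IH]; first by rewrite cards0.
by apply: leq_trans (leq_card_setU _ _) _; rewrite leq_add2l.
Qed.

Lemma card_Pi_le d h m (i : 'I_d) : #|Pi d h m i| <= h.+1 ^ d.-1 * (h * m).+1.
Proof.
(* A point of P_i is the image of its i-th coordinate and of the line index j, normalised to 0 at i. *)
pose J := pffun_on (ord0 : 'I_h.+1) (predC1 i) predT.
pose f (p : {ffun 'I_d -> 'I_h.+1} * 'I_(h * m).+1) : point d h m :=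
  [ffun l => if l == i then p.2 else inord (p.1 l * m)].
have -> : h.+1 ^ d.-1 * (h * m).+1 = #|setX [set j in J] [set: 'I_(h * m).+1]|.
  by rewrite cardsX cardsE card_pffun_on cardsT !card_ord cardC1 card_ord.
apply: leq_trans (leq_imset_card f _); apply: subset_leq_card.
apply/subsetP => x /bigcupP [j _]; rewrite inE => /forallP x_on_line.
apply/imsetP; exists ([ffun l => if l == i then ord0 else j l], x i).
  rewrite in_setX in_setT andbT inE; apply/pffun_onP; split=> // .
  by apply/subsetP => l; rewrite !inE ffunE; case: (l == i); rewrite ?eqxx.
apply/ffunP => l; rewrite ffunE /=; case: eqP => [->|/eqP l_ne_i] //.
apply: val_inj; rewrite /= ffunE (negbTE l_ne_i) inordK.
  by move: (x_on_line l); rewrite l_ne_i => /eqP.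
by rewrite ltnS leq_mul2r -ltnS ltn_ord orbT.
Qed.

Lemma card_Pset_le d h m : #|Pset d h m| <= d * (h.+1 ^ d.-1 * (h * m).+1).
Proof.
apply: leq_trans; first exact: card_bigcup_le.
apply: (@leq_trans (\sum_(i < d) h.+1 ^ d.-1 * (h * m).+1)).
  by apply: leq_sum => i _; apply: card_Pi_le.
by rewrite sum_nat_const card_ord.
Qed.

Lemma card_Pset_le_mul d h m : 0 < m ->
  #|Pset d h m| <= m * (d * h.+1 ^ d + d * h.+1 ^ d.-1).
Proof.
move=> m_gt0; apply: leq_trans (card_Pset_le d h m) _.
case: d => [|d] //=; rewrite expnS.
have : (h * m).+1 <= m * h.+2 by nia.
move: (h.+1 ^ d) => p; nia.
Qed.

Open Scope R_scope.

Lemma INR_addn m n : INR (m + n) = INR m + INR n.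
Proof. exact: plus_INR. Qed.

Lemma INR_muln m n : INR (m * n) = INR m * INR n.
Proof. exact: mult_INR. Qed.

Lemma INR_expn m n : INR (m ^ n) = INR m ^ n.
Proof. by elim: n => [|n IH]; rewrite ?expnS ?INR_muln ?IH. Qed.

Lemma Rpower_pos x y : 0 < Rpower x y.
Proof. apply exp_pos. Qed.

Lemma pow_Rpower x a n : 0 < x -> Rpower x a ^ n = Rpower x (a * INR n).
Proof. intros hx. by rewrite -Rpower_pow ?Rpower_mult //; apply Rpower_pos. Qed.

Lemma Rpower_pow_root x n : (0 < n)%N -> 0 < x -> Rpower (x ^ n) (1 / INR n) = x.
Proof.
  intros hn hx.
  assert (INR n <> 0) by (apply not_0_INR; lia).
  rewrite -Rpower_pow // Rpower_mult.
  replace (INR n * (1 / INR n)) with 1 by (field; assumption).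
  exact: Rpower_1.
Qed.

Lemma Rpower_root_pow a n : (0 < n)%N -> 0 < a -> Rpower a (1 / INR n) ^ n = a.
Proof.
  intros hn ha.
  assert (INR n <> 0) by (apply not_0_INR; lia).
  rewrite pow_Rpower //.
  replace (1 / INR n * INR n) with 1 by (field; assumption).
  exact: Rpower_1.
Qed.

Lemma pow_lt_of_lt_Rpower_root x a n : (0 < n)%N -> 0 <= x -> 0 < a ->
  x < Rpower a (1 / INR n) -> x ^ n < a.
Proof.
  intros hn hx ha hxa.
  destruct (Req_dec x 0) as [->|hx0]; first by rewrite pow_i //; apply/ltP.
  rewrite -(Rpower_root_pow a n) // -!Rpower_pow; [|apply Rpower_pos|lra].
  apply Rlt_Rpower_l; [apply lt_0_INR; apply/ltP; exact hn | lra].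
Qed.

Lemma pow_le_inv_l x y n : (0 < n)%N -> 0 <= y -> x ^ n <= y ^ n -> x <= y.
Proof.
  intros hn hy hxy.
  destruct (Rle_lt_dec x 0) as [hx|hx]; first lra.
  assert (hy0 : 0 < y).
  { destruct (Req_dec y 0) as [hy0|]; last lra.
    move: hxy; rewrite hy0 pow_i; last by apply/ltP.
    assert (0 < x ^ n) by (apply pow_lt; lra). lra. }
  rewrite -(Rpower_pow_root x n) // -(Rpower_pow_root y n) //.
  apply Rle_Rpower_l.
  - apply Rlt_le, Rdiv_lt_0_compat; [lra | apply lt_0_INR; apply/ltP; exact hn].
  - split; [apply pow_lt; lra | exact hxy].
Qed.

Lemma pow_1plus_le x n : 0 <= x -> INR n * x <= 1 / 2 -> (1 + x) ^ n <= 1 + 2 * INR n * x.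
Proof.
  intros hx. induction n as [|n IH]; intros hn; first (simpl; lra).
  rewrite S_INR in hn *.
  assert (0 <= INR n) by apply pos_INR.
  assert (IHn : (1 + x) ^ n <= 1 + 2 * INR n * x) by (apply IH; nra).
  assert (0 <= (1 + x) ^ n) by (apply pow_le; lra).
  simpl; nra.
Qed.

Lemma pow_add2_le H n : 0 < H -> 4 * INR n <= H -> (H + 2) ^ n <= (1 + 4 * INR n / H) * H ^ n.
Proof.
  intros hH hn.
  replace (H + 2) with (H * (1 + 2 / H)) by (field; lra).
  replace (4 * INR n / H) with (2 * INR n * (2 / H)) by (field; lra).
  rewrite Rpow_mult_distr (Rmult_comm _ (H ^ n)).
  apply Rmult_le_compat_l; first (apply pow_le; lra).
  apply pow_1plus_le; first (apply Rlt_le, Rdiv_lt_0_compat; lra).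
  replace (INR n * (2 / H)) with (2 * INR n / H) by (field; lra).
  apply (Rmult_le_reg_r H); first lra.
  replace (2 * INR n / H * H) with (2 * INR n) by (field; lra).
  lra.
Qed.

Lemma Rpower_64_log2 d : (0 < d)%N ->
  Rpower 64 (INR d * (ln (INR d) / ln 2)) = (INR d ^ 6) ^ d.
Proof.
  intros hd.
  assert (hD : 0 < INR d) by (apply lt_0_INR; apply/ltP; exact hd).
  assert (hl2 : 0 < ln 2) by (rewrite -ln_1; apply ln_increasing; lra).
  rewrite -pow_mult -Rpower_pow // mult_INR.
  unfold Rpower; f_equal.
  replace 64 with (2 ^ 6) by ring.
  rewrite ln_pow; last lra.
  replace (INR 6) with 6 by (simpl; ring).
  field; lra.
Qed.

Lemma pow_le_of_Rpower_bound c N x d : 0 < c -> 0 < N -> 0 <= x ->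
  x <= Rpower N ((INR d.+1 - 1) / INR d.+1) * Rpower c (1 / INR d.+1 - 2) ->
  c ^ (2 * d + 1) * x ^ d.+1 <= N ^ d.
Proof.
  intros hc hN hx hxN.
  assert (hD : 0 < INR d.+1) by apply lt_0_INR, Nat.lt_0_succ.
  have := pow_incr _ _ d.+1 (conj hx hxN).
  rewrite Rpow_mult_distr !pow_Rpower //.
  replace ((INR d.+1 - 1) / INR d.+1 * INR d.+1) with (INR d)
    by (rewrite (S_INR d); field; rewrite -S_INR; lra).
  replace ((1 / INR d.+1 - 2) * INR d.+1) with (- INR (2 * d + 1))
    by (rewrite INR_addn INR_muln (S_INR d); simpl; field; rewrite -S_INR; lra).
  rewrite Rpower_Ropp !Rpower_pow //.
  assert (hcp : 0 < c ^ (2 * d + 1)) by (apply pow_lt; lra).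
  intros hpow.
  apply (Rmult_le_compat_l (c ^ (2 * d + 1))) in hpow; last lra.
  replace (c ^ (2 * d + 1) * (N ^ d * / c ^ (2 * d + 1))) with (N ^ d) in hpow
    by (field; lra).
  exact hpow.
Qed.

Lemma pow_15half_le e : (15 / 2) ^ e.+2 <= 5 ^ (2 * e.+1 + 1).
Proof.
  replace (2 * e.+1 + 1)%N with (3 + 2 * e)%N by lia.
  rewrite pow_add pow_mult.
  assert (0 <= (15 / 2) ^ e <= (5 ^ 2) ^ e) by (split; [apply pow_le | apply pow_incr]; lra).
  simpl in *; lra.
Qed.

Section PowerBound.

Variables (e : nat) (D H K N : R).
Hypotheses (hD2 : 2 <= D) (hDe : INR e.+1 <= D) (hH0 : 0 <= H) (hK1 : 1 <= K).
Hypothesis hH : H ^ e.+1 < 9 * D / 2 * (K + 2).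
Hypothesis hN_D : D * (D ^ 6) ^ e.+2 <= N.
Hypothesis hN_K : (5 * D) ^ (2 * e.+1 + 1) * K ^ e.+2 <= N ^ e.+1.

(* H + 2 > D^6 >= 32 D gives H >= 31 D.  Then Bernoulli gives (H + 2)^(e+1) <= 35/31 H^(e+1),
   H^(e+1) >= H >= 31 D forces K >= 9/2, and 35/31 * 9/2 (K + 2) <= 15/2 K for such K. *)
Lemma pow_add2_le_of_gt : D ^ 6 < H + 2 -> (H + 2) ^ e.+1 <= 15 / 2 * D * K.
Proof.
  intros hlarge.
  assert (hD6 : 32 * D <= D ^ 6).
  { assert (2 ^ 5 <= D ^ 5) by (apply pow_incr; lra).
    replace (D ^ 6) with (D * D ^ 5) by ring. simpl in *; nra. }
  assert (hH31 : 31 * D <= H) by lra.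
  assert (hHpow : H <= H ^ e.+1).
  { assert (1 <= H ^ e) by (apply pow_R1_Rle; lra). simpl; nra. }
  assert (hK : 9 / 2 <= K) by nra.
  assert (hratio : 4 * INR e.+1 / H <= 4 / 31).
  { apply (Rmult_le_reg_r H); first lra.
    replace (4 * INR e.+1 / H * H) with (4 * INR e.+1) by (field; lra).
    lra. }
  assert (hbern := pow_add2_le H e.+1 ltac:(lra) ltac:(lra)).
  assert (0 <= H ^ e.+1) by (apply pow_le; lra).
  nra.
Qed.

(* Raise to the power e+1 and compare with the hypothesis on K, using (15/2)^(e+2) <= 5^(2e+3). *)
Lemma mul_pow_add2_le_of_pow_le : (H + 2) ^ e.+1 <= 15 / 2 * D * K -> D * (H + 2) ^ e.+2 <= N.
Proof.
  intros hP.
  assert (hDp : 0 <= D ^ e.+1) by (apply pow_le; lra).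
  assert (hDK : 0 <= D ^ (2 * e.+1 + 1) * K ^ e.+2)
    by (apply Rmult_le_pos; apply pow_le; lra).
  apply (pow_le_inv_l _ _ e.+1); [done | |].
  { assert (0 <= D * (D ^ 6) ^ e.+2) by (apply Rmult_le_pos; repeat apply pow_le; lra). lra. }
  apply (Rle_trans _ (D ^ e.+1 * (15 / 2 * D * K) ^ e.+2)).
  { rewrite Rpow_mult_distr -pow_mult Nat.mul_comm pow_mult.
    apply Rmult_le_compat_l; first exact hDp.
    apply pow_incr; split; [apply pow_le; lra | exact hP]. }
  assert (hNK := hN_K); rewrite Rpow_mult_distr in hNK.
  rewrite (Rpow_mult_distr (15 / 2 * D)) (Rpow_mult_distr (15 / 2)).
  replace (D ^ e.+1 * ((15 / 2) ^ e.+2 * D ^ e.+2 * K ^ e.+2))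
    with ((15 / 2) ^ e.+2 * (D ^ (2 * e.+1 + 1) * K ^ e.+2))
    by (replace (2 * e.+1 + 1)%N with (e.+1 + e.+2)%nat by lia; rewrite pow_add; ring).
  apply (Rle_trans _ (5 ^ (2 * e.+1 + 1) * (D ^ (2 * e.+1 + 1) * K ^ e.+2))); last lra.
  apply Rmult_le_compat_r; [exact hDK | exact: pow_15half_le].
Qed.

Lemma mul_pow_add2_le : D * (H + 2) ^ e.+2 <= N.
Proof.
  destruct (Rle_lt_dec (H + 2) (D ^ 6)) as [hsmall|hlarge].
  - apply (Rle_trans _ (D * (D ^ 6) ^ e.+2)); last exact hN_D.
    apply Rmult_le_compat_l; first lra.
    apply pow_incr; lra.
  - exact: mul_pow_add2_le_of_pow_le (pow_add2_le_of_gt hlarge).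
Qed.

End PowerBound.

Lemma INR_Z_to_nat z : (0 <= z)%Z -> INR (Z.to_nat z) = IZR z.
Proof. intros hz. by rewrite INR_IZR_INZ Z2Nat.id. Qed.

Lemma INR_Int_part_le r : 0 <= r -> INR (Z.to_nat (Int_part r)) <= r.
Proof.
  intros hr. destruct (base_Int_part r) as [hle _].
  destruct (Z_le_gt_dec 0 (Int_part r)) as [hz|hz].
  - by rewrite INR_Z_to_nat.
  - replace (Z.to_nat _) with 0%nat by lia; simpl; lra.
Qed.

Lemma Int_part_ge1 r : 1 <= r -> (1 <= Z.to_nat (Int_part r))%N.
Proof.
  intros hr. destruct (base_Int_part r) as [_ hgt].
  assert (hz : (0 < Int_part r)%Z) by (apply lt_IZR; lra).
  lia.
Qed.

(* Int_part is the floor, so - Int_part (- y) is the ceiling. *)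
Lemma INR_ceil_sub1_lt y : 0 < y -> INR (Z.to_nat (- Int_part (- (y - 1)))) < y.
Proof.
  intros hy. destruct (base_Int_part (- (y - 1))) as [hle hgt].
  destruct (Z_le_gt_dec 0 (- Int_part (- (y - 1)))) as [hz|hz].
  - rewrite INR_Z_to_nat // opp_IZR. lra.
  - replace (Z.to_nat _) with 0%nat by lia; simpl; lra.
Qed.

Lemma hval_lt d k : INR (hval d k) < Rpower (9 * INR d / 2 * (INR k + 2)) (1 / (INR d - 1)).
Proof. apply INR_ceil_sub1_lt, Rpower_pos. Qed.

Definition mval_denom (d h : nat) : R :=
  INR d * INR (h + 1) ^ d + INR d * INR (h + 1) ^ (d - 1).

Lemma INR_mval_denom d h : INR (d * h.+1 ^ d + d * h.+1 ^ d.-1) = mval_denom d h.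
Proof. by rewrite /mval_denom INR_addn !INR_muln !INR_expn subn1 addn1. Qed.

Lemma mval_denom_gt0 d h : (0 < d)%N -> 0 < mval_denom d h.
Proof.
  intros hd. rewrite -INR_mval_denom. apply lt_0_INR; apply/ltP.
  by rewrite addn_gt0 muln_gt0 hd expn_gt0.
Qed.

Lemma mval_denom_le_mul_pow d h : mval_denom d.+1 h <= INR d.+1 * (INR h + 2) ^ d.+1.
Proof.
  rewrite /mval_denom subn1 succnK INR_addn -!tech_pow_Rmult.
  change (INR 1) with 1.
  assert (hH := pos_INR h).
  assert (hpow : (INR h + 1) ^ d <= (INR h + 2) ^ d) by (apply pow_incr; lra).
  assert (0 <= (INR h + 1) ^ d) by (apply pow_le; lra).
  assert (0 <= INR d.+1) by apply pos_INR.
  replace (INR d.+1 * ((INR h + 1) * (INR h + 1) ^ d) + INR d.+1 * (INR h + 1) ^ d)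
    with (INR d.+1 * ((INR h + 2) * (INR h + 1) ^ d)) by ring.
  apply Rmult_le_compat_l; first done.
  apply Rmult_le_compat_l; lra.
Qed.

Lemma mvalE d n h : mval d n h = Z.to_nat (Int_part (INR n / mval_denom d h)).
Proof. reflexivity. Qed.

Lemma mval_ge1 d n h : 0 < mval_denom d h -> mval_denom d h <= INR n -> (1 <= mval d n h)%N.
Proof.
  intros hw hwn. rewrite mvalE; apply Int_part_ge1.
  apply (Rmult_le_reg_r (mval_denom d h)); first exact hw.
  rewrite /Rdiv Rmult_assoc Rinv_l; lra.
Qed.

Lemma mval_mul_le d n h : 0 < mval_denom d h -> INR (mval d n h) * mval_denom d h <= INR n.
Proof.
  intros hw.
  assert (hr : 0 <= INR n / mval_denom d h).
  { apply Rmult_le_pos; [apply pos_INR | apply Rlt_le, Rinv_0_lt_compat, hw]. }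
  assert (hm := INR_Int_part_le _ hr); rewrite -mvalE in hm.
  apply (Rmult_le_compat_r (mval_denom d h)) in hm; last lra.
  by rewrite /Rdiv Rmult_assoc Rinv_l ?Rmult_1_r in hm; [|lra].
Qed.

Lemma mval_denom_le d n k h : (2 <= d)%N -> (0 < k)%N ->
  INR h < Rpower (9 * INR d / 2 * (INR k + 2)) (1 / (INR d - 1)) ->
  INR d * Rpower 64 (INR d * (ln (INR d) / ln 2)) <= INR n ->
  INR k <= Rpower (INR n) ((INR d - 1) / INR d) * Rpower (5 * INR d) (1 / INR d - 2) ->
  mval_denom d h <= INR n.
Proof.
  case: d => [|[|e]] // _ hk hh hn hkn.
  assert (hD : INR e.+2 = INR e.+1 + 1) by exact: S_INR.
  assert (hD1 : 1 <= INR e.+1) by (apply (le_INR 1); lia).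
  assert (hK : 1 <= INR k) by (apply (le_INR 1); lia).
  assert (hN : 0 < INR n).
  { eapply Rlt_le_trans; last exact hn.
    apply Rmult_lt_0_compat; [lra | apply Rpower_pos]. }
  rewrite Rpower_64_log2 // in hn.
  replace (INR e.+2 - 1) with (INR e.+1) in hh by lra.
  apply (Rle_trans _ _ _ (mval_denom_le_mul_pow _ _)).
  assert (hH := pos_INR h).
  apply (mul_pow_add2_le e _ _ (INR k)); try lra.
  - apply pow_lt_of_lt_Rpower_root; [done | exact: pos_INR | | exact hh].
    apply Rmult_lt_0_compat; lra.
  - apply pow_le_of_Rpower_bound; [lra | exact hN | exact: pos_INR | exact hkn].
Qed.

Theorem lemma14 (d n k : nat) (hd : (2 <= d)%N)
  (hn : Rle (Rmult (INR d) (Rpower 64 (Rmult (INR d) (Rdiv (ln (INR d)) (ln 2)))))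
            (INR n))
  (hk0 : (0 < k)%N)
  (hk : Rle (INR k)
            (Rmult (Rpower (INR n) (Rdiv (Rminus (INR d) 1) (INR d)))
                   (Rpower (Rmult 5 (INR d)) (Rminus (Rdiv 1 (INR d)) 2)))) :
  let h := hval d k in
  let m := mval d n h in
  (1 <= m)%N /\ (#|Pset d h m| <= n)%N.
Proof.
  intros h m.
  have hden_gt0 : 0 < mval_denom d h by apply mval_denom_gt0; lia.
  have hden_le : mval_denom d h <= INR n := mval_denom_le d n k h hd hk0 (hval_lt d k) hn hk.
  have hm : (1 <= m)%N := mval_ge1 d n h hden_gt0 hden_le.
  split; first exact hm.
  apply/leP; apply INR_le.
  apply (Rle_trans _ (INR m * mval_denom d h)); last exact: mval_mul_le.
  rewrite -INR_mval_denom -INR_muln; apply le_INR; apply/leP.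
  exact: card_Pset_le_mul.
Qed.
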